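(* Let $\epsilon>0$. For every $\widehat\phi\in\mathcal{M}_\epsilon$ there exists a unique $\widehat\psi\in\mathcal{M}$ satisfying $$\frac{\widehat\psi_{i+1,j}-\widehat\psi_{i,j}}{\Delta t}-\frac{\sigma^2}{2}\frac{\widehat\psi_{i+1,j+1}-2\widehat\psi_{i+1,j}+\widehat\psi_{i+1,j-1}}{(\Delta x)^2}=\frac{1}{\sigma^2}f(x_j,\widehat\phi_{i+1,j}\widehat\psi_{i+1,j})\widehat\psi_{i+1,j},\quad 0\le i\le I-1,\ 0\le j\le J,$$ with $\widehat\psi_{0,j}=\frac{m_0(x_j)}{\widehat\phi_{0,j}}$ for all $j$ and the conventions $\widehat\psi_{i,-1}=\widehat\psi_{i,0}$, $\widehat\psi_{i,J+1}=\widehat\psi_{i,J}$. Hence $\widehat\Psi:\widehat\phi\in\mathcal{M}_\epsilon\mapsto\widehat\psi\in\mathcal{M}$ is well defined, and moreover $\widehat\Psi(\widehat\phi)\in\mathcal{M}_0$ for every $\widehat\phi\in\mathcal{M}_\epsilon$.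
   Context: Discrete setting: $\Omega=(0,1)$, $T>0$, $\sigma>0$; $m_0:[0,1]\to\mathbb{R}$ bounded with $m_0\ge0$. $f:[0,1]\times\mathbb{R}\to\mathbb{R}$ is continuous and nonincreasing in its second variable, bounded, and $f\le0$. For positive integers $I,J$: $\Delta t=T/I$, $\Delta x=1/J$, $x_j=j\Delta x$. $\mathcal{M}$ is the set of real matrices $(m_{i,j})_{0\le i\le I,0\le j\le J}$ and $\mathcal{M}_\epsilon=\{m\in\mathcal{M}: m_{i,j}\ge\epsilon\ \forall i,j\}$. *)

From Stdlib Require Import Reals.
Open Scope R_scope.

(* A real matrix (m_{i,j})_{0<=i<=I, 0<=j<=J} is modelled as a function
   nat -> nat -> R; only entries with i <= I, j <= J are meaningful. *)
Definition mat := nat -> nat -> R.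

Definition in_M_eps (I J : nat) (eps : R) (m : mat) : Prop :=
  forall i j, (i <= I)%nat -> (j <= J)%nat -> eps <= m i j.

Definition mat_eq (I J : nat) (a b : mat) : Prop :=
  forall i j, (i <= I)%nat -> (j <= J)%nat -> a i j = b i j.

(* Neighbours with the Neumann conventions psi_{i,-1} = psi_{i,0},
   psi_{i,J+1} = psi_{i,J}. *)
Definition jm1 (j : nat) : nat := (j - 1)%nat.           (* 0 - 1 = 0 *)
Definition jp1 (J j : nat) : nat := Nat.min (S j) J.     (* J + 1 -> J *)

Definition scheme (T sigma : R) (I J : nat) (f : R -> R -> R)
    (m0 : R -> R) (phi psi : mat) : Prop :=
  let dt := T / INR I in
  let dx := 1 / INR J in
  let x := fun j : nat => INR j * dx in
  (forall i j, (i <= I - 1)%nat -> (j <= J)%nat ->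
     (psi (S i) j - psi i j) / dt
     - sigma ^ 2 / 2 *
       ((psi (S i) (jp1 J j) - 2 * psi (S i) j + psi (S i) (jm1 j)) / dx ^ 2)
     = 1 / sigma ^ 2 * f (x j) (phi (S i) j * psi (S i) j) * psi (S i) j)
  /\ (forall j, (j <= J)%nat -> psi 0%nat j = m0 (x j) / phi 0%nat j).

From Stdlib Require Import Reals Lra Lia.
Open Scope R_scope.

(* Writing A = 1/dt and B = sigma^2/(2 dx^2), one time step of the scheme is
   the nonlinear elliptic problem
       A (v_j - u_j) - B (v_{j+1} - 2 v_j + v_{j-1}) = g_j(v_j) v_j,  0 <= j <= J,
   with Neumann conventions, where g_j(y) = f(x_j, phi_j y)/sigma^2 is
   nonpositive, continuous and (as phi > 0) nonincreasing in y.  For such a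
   step we prove, for data u >= 0:
   - a discrete minimum principle: every solution v is >= 0;
   - a comparison principle: u <= u' implies v <= w for the solutions, hence
     uniqueness;
   - existence by shooting: fixing v_0 = s determines v_1, ..., v_J by the
     equations at j < J; the residual of the equation at j = J is continuous
     in s, <= 0 at s = 0 and >= 0 at s = max u, so it vanishes somewhere (IVT).
   Marching in time from psi_0 = m0/phi_0 >= 0 then builds the unique
   nonnegative solution psi of the whole scheme. *)

(* Pointwise forms of the Stdlib continuity combinators, which are stated for
   the `%F` function operations and so do not match lambda terms directly. *)
Lemma cpt_plus (a b : R -> R) x :
  continuity_pt a x -> continuity_pt b x -> continuity_pt (fun s => a s + b s) x.
Proof. apply continuity_pt_plus. Qed.

Lemma cpt_minus (a b : R -> R) x :
  continuity_pt a x -> continuity_pt b x -> continuity_pt (fun s => a s - b s) x.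
Proof. apply continuity_pt_minus. Qed.

Lemma cpt_mult (a b : R -> R) x :
  continuity_pt a x -> continuity_pt b x -> continuity_pt (fun s => a s * b s) x.
Proof. apply continuity_pt_mult. Qed.

Lemma cpt_const (c : R) x : continuity_pt (fun _ => c) x.
Proof. apply continuity_pt_const; intros ? ?; reflexivity. Qed.

Lemma cpt_div_const (a : R -> R) c x :
  continuity_pt a x -> continuity_pt (fun s => a s / c) x.
Proof. intros Ha. apply (cpt_mult a (fun _ => / c)); [exact Ha|apply cpt_const]. Qed.

Lemma cpt_scale c (a : R -> R) x :
  continuity_pt a x -> continuity_pt (fun s => c * a s) x.
Proof. intros Ha. apply (cpt_mult (fun _ => c) a); [apply cpt_const|exact Ha]. Qed.

Lemma cpt_comp (a b : R -> R) x :
  continuity_pt a x -> continuity_pt b (a x) -> continuity_pt (fun s => b (a s)) x.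
Proof. apply continuity_pt_comp. Qed.

Lemma finite_argmax (h : nat -> R) (J : nat) :
  exists j0, (j0 <= J)%nat /\ forall j, (j <= J)%nat -> h j <= h j0.
Proof.
  induction J as [|J [j0 [Hj0 Hmax]]].
  - exists 0%nat; split; [lia|]. intros j Hj. replace j with 0%nat by lia. lra.
  - destruct (Rle_dec (h j0) (h (S J))) as [Hle|Hlt].
    + exists (S J); split; [lia|]. intros j Hj.
      destruct (Nat.eq_dec j (S J)) as [->|Hne]; [lra|].
      specialize (Hmax j ltac:(lia)); lra.
    + exists j0; split; [lia|]. intros j Hj.
      destruct (Nat.eq_dec j (S J)) as [->|Hne]; [lra|]. apply Hmax; lia.
Qed.

Lemma jp1_le J j : (jp1 J j <= J)%nat.
Proof. unfold jp1; lia. Qed.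

Lemma jm1_le J j : (j <= J)%nat -> (jm1 j <= J)%nat.
Proof. unfold jm1; lia. Qed.

Lemma laplacian_at_max (h : nat -> R) (J j0 : nat) :
  (j0 <= J)%nat -> (forall j, (j <= J)%nat -> h j <= h j0) ->
  h (jp1 J j0) - 2 * h j0 + h (jm1 j0) <= 0.
Proof.
  intros Hj0 Hmax.
  pose proof (Hmax _ (jp1_le J j0)). pose proof (Hmax _ (jm1_le J j0 Hj0)). lra.
Qed.

Definition grid_nonneg (J : nat) (v : nat -> R) : Prop :=
  forall j, (j <= J)%nat -> 0 <= v j.

Section ImplicitStep.

Variables (A B : R) (J : nat) (g : nat -> R -> R).
Hypotheses (HA : 0 < A) (HB : 0 < B).
Hypothesis g_nonpos : forall j y, (j <= J)%nat -> g j y <= 0.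
Hypothesis g_noninc : forall j y1 y2, (j <= J)%nat -> y1 <= y2 -> g j y2 <= g j y1.
Hypothesis g_cont : forall j, (j <= J)%nat -> continuity (g j).

Definition implicit_step (u v : nat -> R) : Prop :=
  forall j, (j <= J)%nat ->
    A * (v j - u j) - B * (v (jp1 J j) - 2 * v j + v (jm1 j)) = g j (v j) * v j.

(* Discrete minimum principle: at a minimum of v the left-hand side would be
   negative if v were, while the right-hand side g(v) v is then nonnegative. *)
Lemma step_nonneg u v :
  grid_nonneg J u -> implicit_step u v -> grid_nonneg J v.
Proof.
  intros Hu Hstep.
  destruct (finite_argmax (fun k => - v k) J) as [j0 [Hj0 Hmin]]. simpl in Hmin.
  assert (Hv0 : 0 <= v j0).
  { destruct (Rle_lt_dec 0 (v j0)) as [Hpos|Hneg]; [exact Hpos|]. exfalso.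
    pose proof (laplacian_at_max (fun k => - v k) J j0 Hj0 Hmin) as Hlap.
    simpl in Hlap.
    pose proof (Hstep j0 Hj0). pose proof (Hu j0 Hj0). pose proof (g_nonpos j0 (v j0) Hj0).
    assert (0 <= B * (v (jp1 J j0) - 2 * v j0 + v (jm1 j0))) by (apply Rmult_le_pos; lra).
    assert (0 <= g j0 (v j0) * v j0) by nra.
    nra. }
  intros j Hj. specialize (Hmin j Hj). lra.
Qed.

(* At a positive
   maximum of v - w the left-hand sides differ by a positive amount, while
   g(v) v - g(w) w <= 0 because g is nonpositive and nonincreasing and w >= 0. *)
Lemma step_comparison u u' v w :
  (forall j, (j <= J)%nat -> u j <= u' j) -> grid_nonneg J u' ->
  implicit_step u v -> implicit_step u' w -> forall j, (j <= J)%nat -> v j <= w j.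
Proof.
  intros Huu' Hu' Hv Hw.
  pose proof (step_nonneg u' w Hu' Hw) as Pw.
  destruct (finite_argmax (fun k => v k - w k) J) as [j0 [Hj0 Hmax]]. simpl in Hmax.
  assert (Hd : v j0 - w j0 <= 0).
  { destruct (Rle_lt_dec (v j0 - w j0) 0) as [Hle|Hlt]; [exact Hle|]. exfalso.
    pose proof (laplacian_at_max (fun k => v k - w k) J j0 Hj0 Hmax) as Hlap.
    simpl in Hlap.
    pose proof (Hv j0 Hj0). pose proof (Hw j0 Hj0). pose proof (Huu' j0 Hj0).
    pose proof (g_nonpos j0 (v j0) Hj0). pose proof (Pw j0 Hj0).
    pose proof (g_noninc j0 (w j0) (v j0) Hj0 ltac:(lra)).
    assert (Hreact : g j0 (v j0) * v j0 - g j0 (w j0) * w j0 <= 0).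
    { assert (g j0 (v j0) * (v j0 - w j0) <= 0) by nra.
      assert ((g j0 (v j0) - g j0 (w j0)) * w j0 <= 0) by nra. nra. }
    assert (0 <= - B * ((v (jp1 J j0) - w (jp1 J j0)) - 2 * (v j0 - w j0)
                        + (v (jm1 j0) - w (jm1 j0)))) by nra.
    assert (0 < A * (v j0 - w j0)) by nra.
    assert (0 <= A * (u' j0 - u j0)) by nra.
    nra. }
  intros j Hj. specialize (Hmax j Hj). lra.
Qed.

Lemma step_unique u u' v w :
  grid_nonneg J u -> (forall j, (j <= J)%nat -> u' j = u j) ->
  implicit_step u v -> implicit_step u' w -> forall j, (j <= J)%nat -> w j = v j.
Proof.
  intros Hu Heq Hv Hw j Hj.
  assert (Hu' : grid_nonneg J u') by (intros k Hk; rewrite Heq by exact Hk; auto).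
  apply Rle_antisym.
  - apply (step_comparison u' u w v); auto. intros k Hk; rewrite Heq by exact Hk; lra.
  - apply (step_comparison u u' v w); auto. intros k Hk; rewrite Heq by exact Hk; lra.
Qed.

Variable u : nat -> R.
Hypothesis u_nonneg : grid_nonneg J u.

(* Shooting: starting from v_0 = v_{-1} = s, the equation at j determines
   v_{j+1}.  The pair stores (v_{k-1}, v_k) with the convention v_{-1} = v_0. *)
Fixpoint shoot (s : R) (k : nat) : R * R :=
  match k with
  | O => (s, s)
  | S k => let p := shoot s k in
           (snd p, 2 * snd p - fst p + (A * (snd p - u k) - g k (snd p) * snd p) / B)
  end.

Definition shot (s : R) (k : nat) : R := snd (shoot s k).

Lemma shoot_fst s k : fst (shoot s k) = shot s (jm1 k).
Proof.
  destruct k as [|k]; [reflexivity|].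
  unfold jm1. replace (S k - 1)%nat with k by lia. reflexivity.
Qed.

Lemma shot_S s k :
  shot s (S k) = 2 * shot s k - shot s (jm1 k)
                 + (A * (shot s k - u k) - g k (shot s k) * shot s k) / B.
Proof. unfold shot at 1. simpl. rewrite shoot_fst. reflexivity. Qed.

(* The equation at j = J is the only one not enforced by the shooting. *)
Definition residual (s : R) : R :=
  A * (shot s J - u J) - B * (fst (shoot s J) - shot s J) - g J (shot s J) * shot s J.

Lemma shoot_continuous k : (k <= J)%nat -> forall s,
  continuity_pt (fun s => fst (shoot s k)) s /\ continuity_pt (fun s => shot s k) s.
Proof.
  unfold shot. induction k as [|k IH]; intros Hk s.
  - simpl. split; apply derivable_continuous_pt, derivable_pt_id.
  - destruct (IH ltac:(lia) s) as [Hp Hc]. simpl. split; [exact Hc|].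
    apply cpt_plus; [apply cpt_minus; [apply cpt_scale; exact Hc|exact Hp]|].
    apply cpt_div_const, cpt_minus.
    + apply cpt_scale, cpt_minus; [exact Hc|apply cpt_const].
    + apply cpt_mult; [|exact Hc]. apply cpt_comp; [exact Hc|]. apply g_cont; lia.
Qed.

Lemma residual_continuous : continuity residual.
Proof.
  intros s. destruct (shoot_continuous J (le_n J) s) as [Hp Hc]. unfold residual.
  apply cpt_minus; [apply cpt_minus|].
  - apply cpt_scale, cpt_minus; [exact Hc|apply cpt_const].
  - apply cpt_scale, cpt_minus; assumption.
  - apply cpt_mult; [|exact Hc]. apply cpt_comp; [exact Hc|]. apply g_cont; lia.
Qed.

Lemma shot_from_zero k : (k <= J)%nat -> shot 0 k <= 0 /\ shot 0 k <= shot 0 (jm1 k).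
Proof.
  induction k as [|k IH]; intros Hk.
  - unfold shot; simpl. lra.
  - destruct (IH ltac:(lia)) as [Hc Hdec]. rewrite shot_S.
    replace (jm1 (S k)) with k by (unfold jm1; lia).
    pose proof (g_nonpos k (shot 0 k) ltac:(lia)). pose proof (u_nonneg k ltac:(lia)).
    assert ((A * (shot 0 k - u k) - g k (shot 0 k) * shot 0 k) / B <= 0).
    { assert (A * (shot 0 k - u k) - g k (shot 0 k) * shot 0 k <= 0) by nra.
      assert (0 < / B) by (apply Rinv_0_lt_compat; lra). unfold Rdiv. nra. }
    lra.
Qed.

Lemma residual_at_zero : residual 0 <= 0.
Proof.
  destruct (shot_from_zero J (le_n J)) as [Hc Hdec]. unfold residual. rewrite shoot_fst.
  pose proof (g_nonpos J (shot 0 J) (le_n J)). pose proof (u_nonneg J (le_n J)). nra.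
Qed.

Lemma shot_from_bound M k : 0 <= M -> (forall j, (j <= J)%nat -> u j <= M) ->
  (k <= J)%nat -> M <= shot M k /\ shot M (jm1 k) <= shot M k.
Proof.
  intros HM Hbound. induction k as [|k IH]; intros Hk.
  - unfold shot; simpl. lra.
  - destruct (IH ltac:(lia)) as [Hc Hinc]. rewrite shot_S.
    replace (jm1 (S k)) with k by (unfold jm1; lia).
    pose proof (g_nonpos k (shot M k) ltac:(lia)). pose proof (Hbound k ltac:(lia)).
    assert (0 <= (A * (shot M k - u k) - g k (shot M k) * shot M k) / B).
    { assert (0 <= A * (shot M k - u k) - g k (shot M k) * shot M k) by nra.
      assert (0 < / B) by (apply Rinv_0_lt_compat; lra). unfold Rdiv. nra. }
    lra.
Qed.

Lemma residual_at_bound M : 0 <= M -> (forall j, (j <= J)%nat -> u j <= M) ->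
  0 <= residual M.
Proof.
  intros HM Hbound. destruct (shot_from_bound M J HM Hbound (le_n J)) as [Hc Hinc].
  unfold residual. rewrite shoot_fst. pose proof (g_nonpos J (shot M J) (le_n J)).
  pose proof (Hbound J (le_n J)). nra.
Qed.

Lemma step_exists : exists v, implicit_step u v.
Proof.
  destruct (finite_argmax u J) as [j0 [Hj0 Hmax]].
  assert (HM : 0 <= u j0) by (apply u_nonneg; exact Hj0).
  pose proof residual_at_zero. pose proof (residual_at_bound (u j0) HM Hmax).
  destruct (IVT_cor residual 0 (u j0) residual_continuous HM ltac:(nra)) as [s [_ Hs]].
  exists (shot s). intros j Hj. unfold residual in Hs. rewrite shoot_fst in Hs.
  destruct (Nat.eq_dec j J) as [->|Hne].
  - unfold jp1. rewrite Nat.min_r by lia. lra.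
  - unfold jp1. rewrite Nat.min_l by lia. rewrite shot_S. field. lra.
Qed.

Lemma nonneg_step_exists : exists v, implicit_step u v /\ grid_nonneg J v.
Proof.
  destruct step_exists as [v Hv]. exists v. split; [exact Hv|].
  exact (step_nonneg u v u_nonneg Hv).
Qed.

End ImplicitStep.

Lemma time_marching (Q : (nat -> R) -> Prop) (P : nat -> (nat -> R) -> (nat -> R) -> Prop)
  (u0 : nat -> R) :
  Q u0 -> (forall i u, Q u -> exists v, P i u v /\ Q v) ->
  forall n, exists psi : mat, psi 0%nat = u0
    /\ (forall i, (i < n)%nat -> P i (psi i) (psi (S i)))
    /\ (forall k, (k <= n)%nat -> Q (psi k)).
Proof.
  intros H0 Hnext n. induction n as [|n [psi [P0 [Psteps Padm]]]].
  - exists (fun _ => u0). split; [reflexivity|]. split; [intros; lia|auto].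
  - destruct (Hnext n (psi n) (Padm n (le_n n))) as [v [Hv Qv]].
    exists (fun k => if Nat.eqb k (S n) then v else psi k). split; [exact P0|split].
    + intros i Hi. rewrite (proj2 (Nat.eqb_neq i (S n))) by lia.
      destruct (Nat.eqb_spec (S i) (S n)) as [Heq|Hne].
      * replace i with n by lia. exact Hv.
      * apply Psteps; lia.
    + intros k Hk. destruct (Nat.eqb_spec k (S n)); [exact Qv|apply Padm; lia].
Qed.

Lemma marching_unique A B J (g : nat -> nat -> R -> R) n (psi psi' : mat) :
  0 < A -> 0 < B ->
  (forall i j y, (j <= J)%nat -> g i j y <= 0) ->
  (forall i j y1 y2, (i <= n)%nat -> (j <= J)%nat -> y1 <= y2 -> g i j y2 <= g i j y1) ->
  (forall k, (k <= n)%nat -> grid_nonneg J (psi k)) ->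
  (forall j, (j <= J)%nat -> psi' 0%nat j = psi 0%nat j) ->
  (forall i, (i < n)%nat -> implicit_step A B J (g (S i)) (psi i) (psi (S i))) ->
  (forall i, (i < n)%nat -> implicit_step A B J (g (S i)) (psi' i) (psi' (S i))) ->
  mat_eq n J psi' psi.
Proof.
  intros HA HB Hneg Hmon Hnn H0 Hpsi Hpsi' k. induction k as [|k IH]; intros j Hk Hj.
  - apply H0; exact Hj.
  - apply (step_unique A B J (g (S k)) HA HB (Hneg (S k)) (fun j y1 y2 => Hmon (S k) j y1 y2 Hk)
             (psi k) (psi' k)); auto; try lia.
    + apply Hnn; lia.
    + intros j' Hj'. apply IH; lia.
Qed.

Lemma grid_point_in_unit J j : (1 <= J)%nat -> (j <= J)%nat -> 0 <= INR j * (1 / INR J) <= 1.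
Proof.
  intros HJ Hj. assert (0 < INR J) by (apply lt_0_INR; lia).
  assert (INR j <= INR J) by (apply le_INR; exact Hj). pose proof (pos_INR j).
  replace (INR j * (1 / INR J)) with (INR j / INR J) by (unfold Rdiv; ring).
  split; [unfold Rdiv; apply Rmult_le_pos; [lra|left; apply Rinv_0_lt_compat; lra]|].
  apply (Rmult_le_reg_r (INR J)); [lra|]. unfold Rdiv.
  rewrite Rmult_assoc, Rinv_l by lra. lra.
Qed.

Definition reaction (sigma : R) (J : nat) (f : R -> R -> R) (phi_row : nat -> R)
    (j : nat) (y : R) : R :=
  1 / sigma ^ 2 * f (INR j * (1 / INR J)) (phi_row j * y).

Lemma scheme_as_steps T sigma I J f m0 phi psi :
  scheme T sigma I J f m0 phi psi <->
  (forall i, (i <= I - 1)%nat ->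
     implicit_step (/ (T / INR I)) (sigma ^ 2 / 2 / (1 / INR J) ^ 2) J
       (reaction sigma J f (phi (S i))) (psi i) (psi (S i)))
  /\ (forall j, (j <= J)%nat -> psi 0%nat j = m0 (INR j * (1 / INR J)) / phi 0%nat j).
Proof.
  unfold scheme, implicit_step, reaction.
  split; intros [Hsteps H0]; split; auto.
  - intros i Hi j Hj. rewrite <- (Hsteps i j Hi Hj). unfold Rdiv; ring.
  - intros i j Hi Hj. rewrite <- (Hsteps i Hi j Hj). unfold Rdiv; ring.
Qed.

Section Reaction.

Variables (sigma : R) (J : nat) (f : R -> R -> R).
Hypotheses (hsigma : 0 < sigma) (hJ : (1 <= J)%nat).
Hypothesis hf_cont : forall x y, 0 <= x <= 1 -> forall e, 0 < e -> exists d, 0 < d /\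
  forall x' y', 0 <= x' <= 1 -> Rabs (x' - x) < d -> Rabs (y' - y) < d ->
    Rabs (f x' y' - f x y) < e.
Hypothesis hf_noninc : forall x y1 y2, 0 <= x <= 1 -> y1 <= y2 -> f x y2 <= f x y1.
Hypothesis hf_nonpos : forall x y, 0 <= x <= 1 -> f x y <= 0.

Let coef_pos : 0 < 1 / sigma ^ 2.
Proof. apply Rdiv_lt_0_compat; [lra|apply pow_lt; exact hsigma]. Qed.

Lemma reaction_nonpos phi_row j y :
  (j <= J)%nat -> reaction sigma J f phi_row j y <= 0.
Proof.
  intros Hj. unfold reaction. pose proof coef_pos.
  pose proof (hf_nonpos _ (phi_row j * y) (grid_point_in_unit J j hJ Hj)). nra.
Qed.

Lemma reaction_noninc phi_row j y1 y2 :
  0 <= phi_row j -> (j <= J)%nat -> y1 <= y2 ->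
  reaction sigma J f phi_row j y2 <= reaction sigma J f phi_row j y1.
Proof.
  intros Hphi Hj Hy. unfold reaction. pose proof coef_pos.
  apply Rmult_le_compat_l; [lra|].
  apply hf_noninc; [apply grid_point_in_unit; auto|nra].
Qed.

Lemma reaction_continuous phi_row j :
  (j <= J)%nat -> continuity (reaction sigma J f phi_row j).
Proof.
  intros Hj y. unfold reaction. apply cpt_scale.
  apply (cpt_comp (fun y => phi_row j * y)).
  - apply cpt_scale, derivable_continuous_pt, derivable_pt_id.
  - pose proof (grid_point_in_unit J j hJ Hj) as Hx.
    intros e He. destruct (hf_cont _ (phi_row j * y) Hx e He) as [d [Hd Hclose]].
    exists d; split; [exact Hd|]. intros y' [_ Hy']. simpl in *. unfold R_dist in *.
    apply Hclose; auto. rewrite Rminus_diag, Rabs_R0; exact Hd.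
Qed.

End Reaction.

Lemma initial_row_nonneg I J (m0 : R -> R) eps (phi : mat) :
  (1 <= J)%nat -> 0 < eps -> in_M_eps I J eps phi ->
  (forall x, 0 <= x <= 1 -> 0 <= m0 x) ->
  grid_nonneg J (fun j => m0 (INR j * (1 / INR J)) / phi 0%nat j).
Proof.
  intros hJ heps hphi hm0 j Hj. pose proof (hphi 0%nat j (Nat.le_0_l I) Hj).
  unfold Rdiv. apply Rmult_le_pos; [apply hm0, grid_point_in_unit; auto|].
  left; apply Rinv_0_lt_compat; lra.
Qed.

Theorem proposition9
  (T sigma : R) (I J : nat) (m0 : R -> R) (f : R -> R -> R) (eps : R)
  (hT : 0 < T) (hsigma : 0 < sigma) (hI : (1 <= I)%nat) (hJ : (1 <= J)%nat)
  (hm0_bdd : exists M, forall x, 0 <= x <= 1 -> Rabs (m0 x) <= M)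
  (hm0_nonneg : forall x, 0 <= x <= 1 -> 0 <= m0 x)
  (hf_cont : forall x y, 0 <= x <= 1 -> forall e, 0 < e -> exists d, 0 < d /\
      forall x' y', 0 <= x' <= 1 -> Rabs (x' - x) < d -> Rabs (y' - y) < d ->
        Rabs (f x' y' - f x y) < e)
  (hf_noninc : forall x y1 y2, 0 <= x <= 1 -> y1 <= y2 -> f x y2 <= f x y1)
  (hf_bdd : exists M, forall x y, 0 <= x <= 1 -> Rabs (f x y) <= M)
  (hf_nonpos : forall x y, 0 <= x <= 1 -> f x y <= 0)
  (heps : 0 < eps)
  (phi : mat) (hphi : in_M_eps I J eps phi) :
  exists psi : mat,
    scheme T sigma I J f m0 phi psi
    /\ (forall psi' : mat, scheme T sigma I J f m0 phi psi' -> mat_eq I J psi' psi)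
    /\ in_M_eps I J 0 psi.
Proof.
  set (A := / (T / INR I)). set (B := sigma ^ 2 / 2 / (1 / INR J) ^ 2).
  set (g := fun k => reaction sigma J f (phi k)).
  assert (HA : 0 < A).
  { apply Rinv_0_lt_compat, Rdiv_lt_0_compat; [lra|apply lt_0_INR; lia]. }
  assert (HB : 0 < B).
  { assert (0 < INR J) by (apply lt_0_INR; lia).
    apply Rdiv_lt_0_compat; [apply Rdiv_lt_0_compat; [apply pow_lt|]; lra|].
    apply pow_lt, Rdiv_lt_0_compat; lra. }
  assert (Hsteps : forall i u, grid_nonneg J u ->
            exists v, implicit_step A B J (g (S i)) u v /\ grid_nonneg J v).
  { intros i u Hu. apply nonneg_step_exists; auto; intros j Hj.
    - apply reaction_nonpos; auto.
    - apply reaction_continuous; auto. }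
  destruct (time_marching _ _ _ (initial_row_nonneg I J m0 eps phi hJ heps hphi hm0_nonneg)
              Hsteps I) as [psi [P0 [Psteps Pnonneg]]].
  exists psi. split; [|split].
  - apply scheme_as_steps. rewrite P0. split; [|reflexivity].
    intros i Hi. apply Psteps. lia.
  - intros psi' Hscheme. apply scheme_as_steps in Hscheme as [Hsteps' H0'].
    apply (marching_unique A B J g I psi psi'); auto.
    + intros i j y Hj. apply reaction_nonpos; auto.
    + intros i j y1 y2 Hi Hj Hy. apply reaction_noninc; auto. pose proof (hphi i j Hi Hj); lra.
    + intros j Hj. rewrite H0', P0 by exact Hj. reflexivity.
    + intros i Hi. apply Hsteps'. lia.
  - intros k j Hk Hj. apply Pnonneg; auto.
Qed.
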